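(* Let $\Lambda$ be a finite set of pixels, $S=\{0,1\}^{\Lambda}$, and let $S_I\subseteq S$ be a nonempty set (the images with label $1$), with $N_I=|S_I|$. Let $F:S\to\{0,1\}$ be its indicator function and $f=F/\sqrt{N_I}$ its normalization. Partition $\Lambda=A\sqcup B$, identify $s\in S$ with $(s_A,s_B)\in\{0,1\}^A\times\{0,1\}^B$, let $\partial\subseteq A$ be a set of boundary pixels with $|\partial|=L_{AB}$, and let $R\subseteq A$ be a region adjacent to the boundary with $|R|=r\,L_{AB}$. Assume: (1) if $s,s'\in S_I$ satisfy $s_B=s'_B$, then $s|_{\partial}=s'|_{\partial}$; (2) for $s_A,s'_A\in\{0,1\}^A$ each of which is extendable (i.e. there is some $s_B$ with $(s_A,s_B)\in S_I$), the number $N_{s_A s'_A}=\#\{s_B\in\{0,1\}^B:(s_A,s_B)\in S_I\text{ and }(s'_A,s_B)\in S_I\}$ depends only on the restrictions $s_A|_R$ and $s'_A|_R$. Then the bipartite entanglement entropy of $f$ satisfies $S_{AB}\le r\,L_{AB}\log 2$.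
   Context: For $f:S\to\mathbb{C}$ with $\sum_s|f(s)|^2=1$, its density matrix is $\rho_{s,s'}=\overline{f(s)}\,f(s')$, and the reduced density matrix on $A$ is $\rho^A_{s_A,s'_A}=\sum_{s_B\in\{0,1\}^B}\rho_{(s_A,s_B),(s'_A,s_B)}$. The bipartite entanglement entropy is $S_{AB}=S_A=-\mathrm{tr}(\rho^A\log\rho^A)$ (computed from the eigenvalues of $\rho^A$, with $0\log 0=0$). *)

From HB Require Import structures.
From mathcomp Require Import all_boot all_order all_algebra.
From mathcomp Require Import boolp reals exp.
Set Implicit Arguments. Unset Strict Implicit. Unset Printing Implicit Defensive.
Import Order.TTheory GRing.Theory Num.Theory.
Local Open Scope ring_scope.

Section Defs.
Variable Lam : finType.

Definition img := {ffun Lam -> bool}.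

Definition sub_t (X : {set Lam}) := {x : Lam | x \in X}.
Definition conf (X : {set Lam}) := {ffun sub_t X -> bool}.

Definition restr (X : {set Lam}) (s : img) : conf X := [ffun x => s (val x)].

Definition glue (A : {set Lam}) (sA : conf A) (sB : conf (~: A)) : img :=
  [ffun x => match insub x : option (sub_t A) with
             | Some a => sA a
             | None => match insub x : option (sub_t (~: A)) with
                       | Some b => sB b
                       | None => false
                       end
             end].

Variable R : realType.

Definition normf (SI : {set img}) (s : img) : R :=
  (s \in SI)%:R / Num.sqrt (#|SI|%:R).

(* density matrix rho_{s,s'} = conj(f s) f s'  (f is real-valued here) *)
Definition rho (f : img -> R) (s s' : img) : R := f s * f s'.

Definition rhoA (A : {set Lam}) (f : img -> R) (sA sA' : conf A) : R :=
  \sum_(sB : conf (~: A)) rho f (glue sA sB) (glue sA' sB).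

Definition rhoA_mx (A : {set Lam}) (f : img -> R) : 'M[R]_#|{: conf A}| :=
  \matrix_(i, j) rhoA f (enum_val i) (enum_val j).
End Defs.

(* eigenvalues of a square matrix counted with multiplicity: a sequence rs with
   char_poly M = \prod_(x <- rs) ('X - x) (unique up to permutation); chosen
   classically, [::] if the characteristic polynomial does not split over R. *)
Definition eigvals (R : realType) (n : nat) (M : 'M[R]_n) : seq R :=
  match pselect (exists rs : seq R, char_poly M = \prod_(x <- rs) ('X - x%:P)) with
  | left H => proj1_sig (cid H)
  | right _ => [::]
  end.

(* von Neumann entropy -tr(rho log rho) from the eigenvalues, 0 log 0 = 0 *)
Definition entropy (R : realType) (n : nat) (M : 'M[R]_n) : R :=
  - \sum_(l <- eigvals M) (if l == 0 then 0 else l * ln l).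

Definition S_AB (Lam : finType) (R : realType) (A : {set Lam}) (f : img Lam -> R) : R :=
  entropy (rhoA_mx A f).

(* The reduced density matrix is the Gram matrix [rho^A = F F^T] of the amplitudes
   [F(s_A, s_B) = f(s_A, s_B)], with entries [N_{s_A s'_A} / N_I].  Its column at a
   non-extendable [s_A] vanishes and, by (2), its column at an extendable [s_A] only
   depends on [s_A|_R]; hence [rho^A = U V] factors through [{0,1}^R].  Sylvester's
   identity [X^k chi(U V) = X^n chi(V U)] then leaves at most [2^|R|] nonzero
   eigenvalues, which are nonnegative and sum to [tr rho^A = 1], so Gibbs' inequality
   bounds the entropy by [log 2^|R| = r L_AB log 2]. *)

From HB Require Import structures.
From mathcomp Require Import all_boot all_order all_algebra.
From mathcomp Require Import boolp reals exp.
From mathcomp Require Import lra.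
Set Implicit Arguments.
Unset Strict Implicit.
Unset Printing Implicit Defensive.

Import Order.TTheory GRing.Theory Num.Theory.
Local Open Scope ring_scope.

Lemma char_poly_mulmxC (F : fieldType) n k (U : 'M[F]_(n, k)) (V : 'M[F]_(k, n)) :
  'X^k * char_poly (U *m V) = 'X^n * char_poly (V *m U).
Proof.
(* Eliminate either off-diagonal block of [[X, U], [V, 1]] in the determinant. *)
set Up := map_mx polyC U; set Vp := map_mx polyC V.
pose B := block_mx ('X%:M : 'M_n) Up Vp (1%:M : 'M_k).
have detB_UV : \det B = char_poly (U *m V).
  have := det_mulmx (block_mx 1%:M (- Up) 0 1%:M) B.
  rewrite mulmx_block det_ublock !det1 !mul1r !mul1mx !mul0mx !add0r mulmx1.
  rewrite addrN mulNmx det_lblock det1 mulr1 => <-.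
  by rewrite /char_poly /char_poly_mx map_mxM.
have := det_mulmx (block_mx 1%:M 0 (- Vp) 'X%:M) B.
rewrite mulmx_block det_lblock det1 mul1r det_scalar detB_UV.
rewrite !mul1mx !mul0mx !addr0 mulNmx mul_scalar_mx mul_mx_scalar addNr.
rewrite det_ublock det_scalar mulmx1 => <-.
by rewrite /char_poly /char_poly_mx map_mxM mulNmx addrC.
Qed.

Lemma count_roots_neq0_char_poly_mulmx (F : fieldType) n k
    (U : 'M[F]_(n, k)) (V : 'M[F]_(k, n)) (rs : seq F) :
  char_poly (U *m V) = \prod_(x <- rs) ('X - x%:P) ->
  (count (predC1 0%R) rs <= k)%N.
Proof.
move=> char_rs.
have size_rs : size rs = n.
  by apply: succn_inj; rewrite -(size_prod_XsubC rs id) -char_rs size_char_poly.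
have /(congr1 (mup 0)) := char_poly_mulmxC U V.
have Xn_XsubC j : 'X^j = ('X - 0%:P) ^+ j :> {poly F} by rewrite subr0.
rewrite char_rs !mupM ?monic_neq0 ?monicXn ?monic_prod_XsubC ?char_poly_monic //.
rewrite !Xn_XsubC !mup_XsubCX eqxx mu_prod_XsubC => mup_eq.
have := count_predC (pred1 0%R) rs; rewrite size_rs => count_rs.
by rewrite -(leq_add2r (count_mem 0 rs)) addnC count_rs mup_eq leq_addr.
Qed.

Lemma mulmx_tr_row_ge0 (R : realDomainType) n (w : 'rV[R]_n) :
  0 <= (w *m w^T) 0 0.
Proof. by rewrite mxE; apply: sumr_ge0 => i _; rewrite !mxE -expr2 sqr_ge0. Qed.

Lemma mulmx_tr_row_gt0 (R : realDomainType) n (w : 'rV[R]_n) :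
  w != 0 -> 0 < (w *m w^T) 0 0.
Proof.
move=> w_neq0; have [i wi_neq0] : exists i, w 0 i != 0.
  apply/existsP; apply: contraR w_neq0 => /existsPn w0.
  by apply/eqP/rowP => i; rewrite mxE; apply/eqP/negPn.
rewrite mxE (bigD1 i) //= ltr_pwDl //.
  by rewrite !mxE lt_def mulf_neq0 // -expr2 sqr_ge0.
by apply: sumr_ge0 => j _; rewrite !mxE -expr2 sqr_ge0.
Qed.

Lemma eigenvalue_mulmx_tr_ge0 (R : realFieldType) n m (M : 'M[R]_(n, m)) a :
  eigenvalue (M *m M^T) a -> 0 <= a.
Proof.
case/eigenvalueP => v v_eigen v_neq0.
have : ((v *m M) *m (v *m M)^T) 0 0 = a * (v *m v^T) 0 0.
  by rewrite trmx_mul !mulmxA -(mulmxA v) v_eigen -scalemxAl mxE.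
have := mulmx_tr_row_ge0 (v *m M); move=> /[swap] ->.
by rewrite pmulr_lge0 // mulmx_tr_row_gt0.
Qed.

Lemma sum_roots_char_poly (F : fieldType) n (M : 'M[F]_n) (rs : seq F) :
  char_poly M = \prod_(x <- rs) ('X - x%:P) -> \sum_(x <- rs) x = \tr M.
Proof.
move=> char_rs.
have size_rs : size rs = n.
  by apply: succn_inj; rewrite -(size_prod_XsubC rs id) -char_rs size_char_poly.
case: n => [|n] in M char_rs size_rs *.
  by move/size0nil: size_rs => ->; rewrite big_nil /mxtrace big_ord0.
have := char_poly_trace M (ltn0Sn n).
rewrite char_rs -[in X in X.-1]size_rs coefPn_prod_XsubC ?size_rs //.
by move/oppr_inj.
Qed.

Section ShannonEntropy.
Variable R : realType.

Definition xlnx (x : R) : R := if x == 0 then 0 else x * ln x.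

(* [ln y <= y - 1] at [y = 1 / (c x)]. *)
Lemma oppr_xlnx_le (c x : R) : 0 < c -> 0 <= x ->
  - xlnx x <= x * ln c + (x != 0)%:R / c - x.
Proof.
move=> c_gt0; rewrite le0r /xlnx => /predU1P[->|x_gt0].
  by rewrite eqxx /= !mul0r !oppr0 !addr0.
rewrite gt_eqF //= mul1r.
have y_gt0 : 0 < (c * x)^-1 by rewrite invr_gt0 mulr_gt0.
have := @le_ln1Dx R ((c * x)^-1 - 1).
rewrite addrCA subrr addr0 ltrBrDl subrr y_gt0 => /(_ isT).
rewrite lnV ?posrE ?mulr_gt0 // lnM ?posrE // => ln_le.
have := ler_wpM2l (ltW x_gt0) ln_le.
rewrite invfM mulrBr mulrN mulrDr mulr1 mulrCA mulfV ?gt_eqF // mulr1.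
lra.
Qed.

Lemma sum_oppr_xlnx_le_ln (rs : seq R) (k : nat) :
  (forall x, x \in rs -> 0 <= x) -> \sum_(x <- rs) x = 1 ->
  (count (predC1 0%R) rs <= k)%N ->
  - \sum_(x <- rs) xlnx x <= ln k%:R.
Proof.
move=> rs_ge0 sum_rs count_le.
set c := count (predC1 0%R) rs in count_le.
have c_gt0 : (0 < c)%N.
  rewrite lt0n; apply: contra_neq (oner_neq0 R) => c0.
  have /hasPn rs0 : ~~ has (predC1 0%R) rs by rewrite has_count -/c c0.
  by rewrite -sum_rs big_seq big1 // => x /rs0 /negPn /eqP.
have cR_gt0 : (0 : R) < c%:R by rewrite ltr0n.
rewrite -sumrN big_seq.
apply: le_trans (ler_sum _ (fun x x_rs => oppr_xlnx_le cR_gt0 (rs_ge0 x x_rs))) _.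
rewrite -big_seq sumrB big_split /= -!mulr_suml sum_rs mul1r.
have -> : \sum_(x <- rs) ((x != 0)%:R : R) = c%:R.
  rewrite /c -sum1_count natr_sum [RHS]big_mkcond /=.
  by apply: eq_bigr => x _; case: (x != 0).
rewrite mulfV ?gt_eqF // addrK ler_ln ?posrE ?ltr0n ?(leq_trans c_gt0) //.
by rewrite ler_nat.
Qed.
End ShannonEntropy.

Lemma entropy_mulmx_tr_le (R : realType) n m k (M : 'M[R]_(n, m))
    (U : 'M[R]_(n, k)) (V : 'M[R]_(k, n)) :
  (0 < k)%N -> M *m M^T = U *m V -> \tr (M *m M^T) = 1 ->
  entropy (M *m M^T) <= ln k%:R.
Proof.
move=> k_gt0 MMt_UV tr1; rewrite /entropy /eigvals.
case: pselect => [splits|_]; last by rewrite big_nil oppr0 ln_ge0 // ler1n.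
case: (cid splits) => rs /= char_rs.
apply: sum_oppr_xlnx_le_ln.
- move=> x x_rs; apply: (eigenvalue_mulmx_tr_ge0 (M := M)).
  by rewrite eigenvalue_root_char char_rs root_prod_XsubC.
- by rewrite (sum_roots_char_poly char_rs).
- by apply: (count_roots_neq0_char_poly_mulmx (U := U) (V := V)); rewrite -MMt_UV.
Qed.

Lemma mulmx_factor_cols (F : pzRingType) m n k (M : 'M[F]_(m, n))
    (e : pred 'I_n) (p : 'I_n -> 'I_k) :
  (forall i j, ~~ e j -> M i j = 0) ->
  (forall j j', e j -> e j' -> p j = p j' -> col j M = col j' M) ->
  exists U : 'M_(m, k), exists V : 'M_(k, n), M = U *m V.
Proof.
move=> M_col0 M_col_eq.
pose pick_col c := [pick j | e j && (p j == c)].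
exists (\matrix_(i, c) if pick_col c is Some j then M i j else 0).
exists (\matrix_(c, j) (e j && (p j == c))%:R).
apply/matrixP => i j; rewrite mxE.
have [ej|e'j] := boolP (e j); last first.
  by rewrite M_col0 // big1 // => c _; rewrite [X in _ * X]mxE (negbTE e'j) mulr0.
rewrite (bigD1 (p j)) //= big1 ?addr0; last first.
  by move=> c /negbTE pj_c; rewrite [X in _ * X]mxE eq_sym pj_c andbF mulr0.
rewrite !mxE ej eqxx mulr1 /pick_col.
case: pickP => [j' /andP[ej' /eqP pj'] | no_col]; last by have := no_col j; rewrite ej eqxx.
by have /colP/(_ i) := M_col_eq j j' ej ej' (esym pj'); rewrite !mxE.
Qed.

Section Configurations.
Variable Lam : finType.

Lemma card_conf (X : {set Lam}) : #|{: conf X}| = (2 ^ #|X|)%N.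
Proof.
by rewrite card_ffun card_bool card_sig; congr (_ ^ _)%N; apply: eq_card => x; rewrite !inE.
Qed.

(* Points of [Y] outside [X] get the junk value [false]. *)
Definition restr_conf (X Y : {set Lam}) (sX : conf X) : conf Y :=
  [ffun y => if insub (val y) is Some x then sX x else false].

Lemma restr_conf_eq (X Y : {set Lam}) (sX tX : conf X) :
  restr_conf Y sX = restr_conf Y tX -> forall x : sub_t X, val x \in Y -> sX x = tX x.
Proof.
move=> eq_restr x x_Y.
by have /ffunP/(_ (exist _ (val x) x_Y)) := eq_restr; rewrite !ffunE /= valK.
Qed.

Variable A : {set Lam}.

Lemma restr_glue (sA : conf A) (sB : conf (~: A)) : restr A (glue sA sB) = sA.
Proof. by apply/ffunP => a; rewrite !ffunE valK. Qed.

Lemma restrC_glue (sA : conf A) (sB : conf (~: A)) : restr (~: A) (glue sA sB) = sB.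
Proof.
apply/ffunP => b; rewrite !ffunE insubF ?valK //.
by apply/negbTE; rewrite -in_setC; apply: valP.
Qed.

Lemma glue_restr (s : img Lam) : glue (restr A s) (restr (~: A) s) = s.
Proof.
apply/ffunP => x; rewrite ffunE.
case: insubP => [a _ <-|x_notA]; first by rewrite ffunE.
by rewrite insubT ?in_setC // => x_A'; rewrite ffunE.
Qed.

Lemma sum_img_glue (V : nmodType) (G : img Lam -> V) :
  \sum_(s : img Lam) G s = \sum_(sA : conf A) \sum_(sB : conf (~: A)) G (glue sA sB).
Proof.
rewrite pair_bigA (reindex (fun s => (restr A s, restr (~: A) s))) /=.
  by apply: eq_bigr => s _; rewrite glue_restr.
exists (fun p => glue p.1 p.2) => [s _|[sA sB] _]; first by rewrite glue_restr.
by rewrite restr_glue restrC_glue.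
Qed.

End Configurations.

Section ReducedDensityMatrix.
Variables (R : realType) (Lam : finType) (A : {set Lam}).

Definition amp_mx (f : img Lam -> R) : 'M[R]_(#|{: conf A}|, #|{: conf (~: A)}|) :=
  \matrix_(i, j) f (glue (enum_val i) (enum_val j)).

Lemma rhoA_mx_amp (f : img Lam -> R) : rhoA_mx A f = amp_mx f *m (amp_mx f)^T.
Proof.
apply/matrixP => i j; rewrite !mxE /rhoA (big_enum_val (A := {: conf (~: A)})) /=.
by apply: eq_bigr => b _; rewrite !mxE.
Qed.

Lemma tr_rhoA_mx (f : img Lam -> R) : \tr (rhoA_mx A f) = \sum_s f s ^+ 2.
Proof.
rewrite (sum_img_glue A) (big_enum_val (A := {: conf A})) /=.
by apply: eq_bigr => a _; rewrite mxE /rhoA; apply: eq_bigr => b _; rewrite /rho expr2.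
Qed.

End ReducedDensityMatrix.

Lemma sum_natr_mem (V : pzSemiRingType) (T : finType) (X : {set T}) :
  \sum_(x : T) ((x \in X)%:R : V) = #|X|%:R.
Proof.
by rewrite -sumr_const [RHS]big_mkcond; apply: eq_bigr => x _; case: (x \in X).
Qed.

Section IndicatorState.
Variables (R : realType) (Lam : finType) (SI : {set img Lam}) (A : {set Lam}).

Lemma normf_mul (s s' : img Lam) :
  normf R SI s * normf R SI s' = ((s \in SI) && (s' \in SI))%:R / #|SI|%:R.
Proof. by rewrite /normf mulrACA -natrM mulnb -invfM -expr2 sqr_sqrtr. Qed.

Lemma sum_normf_sqr : SI != set0 -> \sum_s normf R SI s ^+ 2 = 1.
Proof.
rewrite -card_gt0 => SI_gt0.
under eq_bigr do rewrite expr2 normf_mul andbb.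
by rewrite -mulr_suml sum_natr_mem mulfV // pnatr_eq0 -lt0n.
Qed.

Definition overlap (sA sA' : conf A) : {set conf (~: A)} :=
  [set sB | (glue sA sB \in SI) && (glue sA' sB \in SI)].

Definition extendable (sA : conf A) : bool := [exists sB, glue sA sB \in SI].

Lemma rhoA_normf (sA sA' : conf A) :
  rhoA (normf R SI) sA sA' = #|overlap sA sA'|%:R / #|SI|%:R.
Proof.
rewrite /rhoA; under eq_bigr do rewrite /rho normf_mul.
rewrite -mulr_suml -[#|overlap _ _|%:R]sum_natr_mem.
by congr (_ / _); apply: eq_bigr => sB _; rewrite inE.
Qed.

Lemma overlap_eq0 (sA sA' : conf A) :
  ~~ extendable sA || ~~ extendable sA' -> overlap sA sA' = set0.
Proof.
move=> not_ext; apply/setP => sB; rewrite !inE.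
apply: contraTF not_ext => /andP[sA_sB sA'_sB].
by apply/norP; split; apply/negPn/existsP; exists sB.
Qed.

Lemma rhoA_mx_normf_factor (Rg : {set Lam}) :
  (forall sA sA' tA tA' : conf A,
     extendable sA -> extendable sA' -> extendable tA -> extendable tA' ->
     restr_conf Rg sA = restr_conf Rg tA -> restr_conf Rg sA' = restr_conf Rg tA' ->
     #|overlap sA sA'| = #|overlap tA tA'|) ->
  exists U : 'M[R]_(#|{: conf A}|, #|{: conf Rg}|), exists V,
    rhoA_mx A (normf R SI) = U *m V.
Proof.
move=> overlap_restr.
apply: (mulmx_factor_cols (e := fun j => extendable (enum_val j))
                          (p := fun j => enum_rank (restr_conf Rg (enum_val j)))).
  by move=> i j not_ext; rewrite mxE rhoA_normf overlap_eq0 ?not_ext ?orbT // cards0 mul0r.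
move=> j j' ext_j ext_j' /enum_rank_inj eq_restr; apply/colP => i; rewrite !mxE !rhoA_normf.
have [ext_i|not_ext_i] := boolP (extendable (enum_val i)); last by rewrite !overlap_eq0 ?not_ext_i.
by rewrite (overlap_restr _ _ _ _ ext_i ext_j ext_i ext_j' erefl eq_restr).
Qed.

End IndicatorState.

Theorem theorem3 (R : realType) (Lam : finType) (SI : {set img Lam})
  (A bd Rg : {set Lam}) (r : R) :
  SI != set0 ->
  bd \subset A -> Rg \subset A ->
  #|Rg|%:R = r * #|bd|%:R ->
  (* (1) equal B-parts force equal boundary values *)
  (forall s s' : img Lam, s \in SI -> s' \in SI ->
     restr (~: A) s = restr (~: A) s' -> forall x, x \in bd -> s x = s' x) ->
  (* (2) N_{sA sA'} depends only on the restrictions to Rg *)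
  (forall sA sA' tA tA' : conf A,
     (exists sB, glue sA sB \in SI) -> (exists sB, glue sA' sB \in SI) ->
     (exists sB, glue tA sB \in SI) -> (exists sB, glue tA' sB \in SI) ->
     (forall a : sub_t A, val a \in Rg -> sA a = tA a) ->
     (forall a : sub_t A, val a \in Rg -> sA' a = tA' a) ->
     #|[set sB : conf (~: A) | (glue sA sB \in SI) && (glue sA' sB \in SI)]| =
     #|[set sB : conf (~: A) | (glue tA sB \in SI) && (glue tA' sB \in SI)]|) ->
  S_AB A (normf R SI) <= r * #|bd|%:R * ln 2.
Proof.
move=> SI_neq0 _ _ card_Rg _ overlap_Rg.
have [|U [V rhoA_UV]] := @rhoA_mx_normf_factor R Lam SI A Rg.
  move=> sA sA' tA tA' /existsP ? /existsP ? /existsP ? /existsP ?.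
  by move=> /restr_conf_eq ? /restr_conf_eq ?; apply: overlap_Rg.
rewrite -card_Rg mulr_natl -lnXn // -natrX -card_conf /S_AB.
rewrite rhoA_mx_amp in rhoA_UV *.
apply: entropy_mulmx_tr_le rhoA_UV _; first by rewrite card_conf expn_gt0.
by rewrite -rhoA_mx_amp tr_rhoA_mx sum_normf_sqr.
Qed.
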